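(* Let $D$ be a domain in a metric measure space $(X,d,\mu)$ of finite Hausdorff dimension $\alpha\geqslant2$ and let $(X',d',\mu')$ be a metric measure space of finite Hausdorff dimension $\alpha'\geqslant2$. Let $Q:D\to[0,\infty]$ be measurable, let $f:D\to X'$ be an open discrete mapping which is a ring $Q$-mapping at $x_0\in D$, and let $0<\varepsilon_0<\operatorname{dist}(x_0,\partial D)$ be such that $\overline{B(x_0,\varepsilon_0)}$ is a compact subset of $D$. Assume that for some $\varepsilon_0'\in(0,\varepsilon_0)$, some function $F(\varepsilon,\varepsilon_0)$ and some family of nonnegative Lebesgue measurable functions $\psi_\varepsilon:(\varepsilon,\varepsilon_0)\to[0,\infty]$, $\varepsilon\in(0,\varepsilon_0')$, $\int_{\varepsilon<d(x,x_0)<\varepsilon_0}Q(x)\psi_\varepsilon^\alpha(d(x,x_0))\,d\mu(x)\leqslant F(\varepsilon,\varepsilon_0)$ and $0<I(\varepsilon,\varepsilon_0):=\int_\varepsilon^{\varepsilon_0}\psi_\varepsilon(t)\,dt<\infty$ for all $\varepsilon\in(0,\varepsilon_0')$. If $f$ satisfies condition $\mathbf{A}$, then $M_{\alpha'}\big(\Gamma(f(\overline{B(x_0,\varepsilon)}),\partial f(B(x_0,\varepsilon_0)),X')\big)\leqslant F(\varepsilon,\varepsilon_0)/I^\alpha(\varepsilon,\varepsilon_0)$ for all $\varepsilon\in(0,\varepsilon_0')$.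
   Context: $(X,d,\mu)$, $(X',d',\mu')$ are metric spaces with locally finite Borel measures. $B(x_0,r)=\{x:d(x,x_0)<r\}$, $S(x_0,r)=\{x:d(x,x_0)=r\}$, $A(x_0,r_1,r_2)=\{x:r_1<d(x,x_0)<r_2\}$. $\Gamma(E,F,H)$ is the family of continuous curves $\gamma:[0,1]\to X$ (resp. $X'$) with $\gamma(0)\in E$, $\gamma(1)\in F$, $\gamma(t)\in H$ for $t\in(0,1)$. A Borel $\rho\geqslant0$ is admissible for $\Gamma$ if $\int_\gamma\rho\,ds\geqslant1$ for each locally rectifiable $\gamma\in\Gamma$; $M_{\alpha'}(\Gamma)=\inf_\rho\int_{X'}\rho^{\alpha'}d\mu'$. $f:D\to X'$ is a ring $Q$-mapping at $x_0$ if for all $0<r_1<r_2<\infty$ and every Lebesgue measurable $\eta:(r_1,r_2)\to[0,\infty]$ with $\int_{r_1}^{r_2}\eta\,dr\geqslant1$: $M_{\alpha'}(f(\Gamma(S(x_0,r_1),S(x_0,r_2),A(x_0,r_1,r_2))))\leqslant\int_{A(x_0,r_1,r_2)\cap D}Q(x)\eta^\alpha(d(x,x_0))\,d\mu(x)$. A mapping is discrete if preimages of points are discrete sets, open if it maps open sets to open sets. For an open discrete $f:D\to X'$, a curve $\beta:[a,b)\to X'$ and $x\in f^{-1}(\beta(a))$, a curve $\alpha:[a,c)\to D$ is a maximal $f$-lifting of $\beta$ starting at $x$ if $\alpha(a)=x$, $f\circ\alpha=\beta|_{[a,c)}$, and for no $c<c'\leqslant b$ is there a curve $\alpha':[a,c')\to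 D$ with $\alpha=\alpha'|_{[a,c)}$ and $f\circ\alpha'=\beta|_{[a,c')}$. Condition $\mathbf{A}$: for every curve $\beta:[a,b)\to X'$ and every $x\in f^{-1}(\beta(a))$, $f$ has a maximal $f$-lifting of $\beta$ starting at $x$. *)

From HB Require Import structures.
From mathcomp Require Import all_boot all_order all_algebra.
From mathcomp Require Import all_classical all_reals all_analysis.
From mathcomp Require Import measurable_realfun.
Set Implicit Arguments.
Unset Strict Implicit.
Unset Printing Implicit Defensive.
Import Order.TTheory GRing.Theory Num.Theory.

Local Open Scope classical_set_scope.
Local Open Scope ring_scope.

(* The real line equipped with the (complete) Lebesgue sigma-algebra:
   measurable functions on it are the Lebesgue measurable functions. *)
Definition lebR (R : realType) :=
  caratheodory_type ((wlength (R:=R) idfun)^*)%mu.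

Section MetricDefs.
Context {R : realType} {T : Type} (d : T -> T -> R).

Definition is_metric : Prop :=
  [/\ (forall x y, 0 <= d x y),
      (forall x y, d x y = 0 <-> x = y),
      (forall x y, d x y = d y x) &
      (forall x y z, d x z <= d x y + d y z)].

Definition mball (x0 : T) (r : R) : set T := [set x | d x x0 < r].
Definition msphere (x0 : T) (r : R) : set T := [set x | d x x0 = r].
Definition mannulus (x0 : T) (r1 r2 : R) : set T :=
  [set x | r1 < d x x0 < r2].

Definition d_open (A : set T) : Prop :=
  forall x, A x -> exists2 r : R, 0 < r & mball x r `<=` A.
Definition d_closure (A : set T) : set T :=
  [set x | forall r : R, 0 < r -> exists2 y, A y & d x y < r].
Definition d_interior (A : set T) : set T :=
  [set x | exists2 r : R, 0 < r & mball x r `<=` A].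
Definition d_boundary (A : set T) : set T := d_closure A `\` d_interior A.

Definition d_connected (A : set T) : Prop :=
  forall U V : set T, d_open U -> d_open V -> A `<=` U `|` V ->
    A `&` U `&` V = set0 -> A `&` U = set0 \/ A `&` V = set0.

Definition d_domain (A : set T) : Prop :=
  [/\ A !=set0, d_open A & d_connected A].

Definition d_compact (A : set T) : Prop :=
  forall F : set (set T), (forall U, F U -> d_open U) ->
    A `<=` \bigcup_(U in F) U ->
    exists (n : nat) (g : nat -> set T),
      (forall i, (i < n)%N -> F (g i)) /\
      A `<=` \bigcup_(i in [set i : nat | (i < n)%N]) g i.

(* dist(x, E) = inf { d(x,y) : y in E }  (= +oo if E is empty) *)
Definition dist_to (x : T) (E : set T) : \bar R :=
  ereal_inf [set (d x y)%:E | y in E].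

Definition diam (U : set T) : \bar R :=
  ereal_sup [set (d p.1 p.2)%:E | p in U `*` U].

Definition hterm (s : R) (U : set T) : \bar R :=
  if pselect (U = set0) then 0%E else (diam U `^ s)%E.

Definition haus_delta (s delta : R) (A : set T) : \bar R :=
  ereal_inf [set (\sum_(0 <= i <oo) hterm s (U i))%E
            | U in [set U : nat -> set T |
                     A `<=` \bigcup_i U i /\
                     forall i, (diam (U i) <= delta%:E)%E]].

(* H^s = lim_{delta -> 0} H^s_delta = sup_{delta > 0} H^s_delta *)
Definition haus (s : R) (A : set T) : \bar R :=
  ereal_sup [set haus_delta s delta A | delta in [set delta : R | 0 < delta]].

Definition hdim : \bar R :=
  ereal_inf [set s%:E | s in [set s : R | 0 <= s /\ haus s setT = 0%E]].

Definition cont_on (g : R -> T) (I : set R) : Prop :=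
  forall t, I t -> forall e : R, 0 < e ->
    exists2 del : R, 0 < del &
      forall s, I s -> `|s - t| < del -> d (g s) (g t) < e.

Definition is_curve (g : R -> T) : Prop := cont_on g [set t | 0 <= t <= 1].

Definition curve_family (E F H : set T) : set (R -> T) :=
  [set g | [/\ is_curve g, E (g 0), F (g 1) &
              forall t, 0 < t < 1 -> H (g t)]].

Definition curve_length (g : R -> T) (a b : R) : \bar R :=
  ereal_sup [set x | exists (n : nat) (t : nat -> R),
     [/\ t 0%N = a, t n = b, (forall i, (i < n)%N -> t i <= t i.+1) &
         x = (\sum_(i < n) d (g (t i)) (g (t i.+1)))%:E]].

(* a closed curve [0,1] -> T is locally rectifiable iff it is rectifiable *)
Definition rectifiable (g : R -> T) : Prop :=
  (curve_length g 0 1 < +oo)%E.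

Definition normal_rep (g h : R -> T) : Prop :=
  forall t, 0 <= t <= 1 -> h (fine (curve_length g 0 t)) = g t.

End MetricDefs.

Section ModulusDefs.
Context {R : realType} {dsp : measure_display} {T : measurableType dsp}
  (d : T -> T -> R).

Definition borel_for : Prop :=
  forall A : set T, measurable A <-> <<s [set U | d_open d U] >> A.

Definition locally_finite (mu : {measure set T -> \bar R}) : Prop :=
  forall x, exists2 r : R, 0 < r & (mu (mball d x r) < +oo)%E.

(* int_g rho ds >= 1 for every locally rectifiable g in Gamma;
   int_g rho ds := int_0^{l(g)} rho(g0(s)) ds, g0 the normal representation *)
Definition admissible (Gam : set (R -> T)) (rho : T -> \bar R) : Prop :=
  [/\ (forall x, (0 <= rho x)%E), measurable_fun [set: T] rho &
      forall g, Gam g -> rectifiable d g -> forall h, normal_rep d g h ->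
        (1 <= \int[lebesgue_measure]_(s in [set s : R | (0 <= s <= fine (curve_length d g 0 1))%R])
                rho (h s))%E].

Definition modulus (mu : {measure set T -> \bar R}) (p : R)
    (Gam : set (R -> T)) : \bar R :=
  ereal_inf [set (\int[mu]_x (rho x `^ p))%E | rho in admissible Gam].

End ModulusDefs.

Section MappingDefs.
Context {R : realType} {T T' : Type} (d : T -> T -> R) (d' : T' -> T' -> R)
  (D : set T) (f : T -> T').

Definition cont_map_on : Prop :=
  forall x, D x -> forall e : R, 0 < e ->
    exists2 del : R, 0 < del &
      forall z, D z -> d z x < del -> d' (f z) (f x) < e.

Definition open_map_on : Prop :=
  forall U, U `<=` D -> d_open d U -> d_open d' (f @` U).

Definition discrete_map_on : Prop :=
  forall x, D x -> exists2 r : R, 0 < r &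
    forall z, D z -> f z = f x -> d z x < r -> z = x.

Definition image_family (Gam : set (R -> T)) : set (R -> T') :=
  [set f \o g | g in Gam].

Definition is_lifting (beta : R -> T') (x : T) (a c : R) (al : R -> T) : Prop :=
  [/\ al a = x, cont_on d al [set t | a <= t < c],
      (forall t, a <= t < c -> D (al t)) &
      (forall t, a <= t < c -> f (al t) = beta t)].

Definition maximal_lifting (beta : R -> T') (x : T) (a b c : R)
    (al : R -> T) : Prop :=
  [/\ a < c <= b, is_lifting beta x a c al &
      ~ (exists (c' : R) (al' : R -> T),
           [/\ c < c' <= b, is_lifting beta x a c' al' &
               forall t, a <= t < c -> al' t = al t])].

Definition condition_A : Prop :=
  forall (beta : R -> T') (a b : R), a < b ->
    cont_on d' beta [set t | a <= t < b] ->
    forall x, D x -> f x = beta a ->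
      exists (c : R) (al : R -> T), maximal_lifting beta x a b c al.

End MappingDefs.

Definition ring_Q_map {R : realType} {dsp dsp' : measure_display}
  {T : measurableType dsp} {T' : measurableType dsp'}
  (d : T -> T -> R) (d' : T' -> T' -> R)
  (mu : {measure set T -> \bar R}) (mu' : {measure set T' -> \bar R})
  (alpha alpha' : R) (D : set T) (f : T -> T') (Q : T -> \bar R) (x0 : T) : Prop :=
  forall r1 r2 : R, 0 < r1 -> r1 < r2 ->
  forall eta : lebR R -> \bar R,
    measurable_fun [set r : lebR R | (r1 < r < r2)%R] eta ->
    (forall r, r1 < r < r2 -> (0 <= eta r)%E) ->
    (1 <= \int[completed_lebesgue_measure]_(r in [set r : lebR R | (r1 < r < r2)%R]) eta r)%E ->
    (modulus d' mu' alpha'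
       (image_family f
          ([set g | curve_family d (msphere d x0 r1) (msphere d x0 r2)
                      (mannulus d x0 r1 r2) g /\
                    forall t : R, (0 <= t <= 1)%R -> D (g t)]))
     <= \int[mu]_(x in mannulus d x0 r1 r2 `&` D)
          (Q x * (eta (d x x0) `^ alpha)))%E.

From HB Require Import structures.
From mathcomp Require Import all_boot all_order all_algebra.
From mathcomp Require Import all_classical all_reals all_analysis.
From mathcomp Require Import measurable_realfun.
From mathcomp Require Import ring lra.
Import Order.TTheory GRing.Theory Num.Theory HBNNSimple.
Local Open Scope classical_set_scope.
Local Open Scope ring_scope.
Set Implicit Arguments.
Unset Strict Implicit.

(* Let rho be admissible for the image under f of the curves crossing the
   annulus A(x0, e, eps0). Take a rectifiable curve beta from f of the closed
   e-ball to the boundary of f(B(x0, eps0)) and a maximal lifting of it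
   starting in the closed ball (condition A). A lifting that stays in the
   compact ball converges at its endpoint, because f is discrete, so it could
   be extended; and beta(1) lies outside the open set f(B(x0, eps0)). Hence the
   lifting leaves B(x0, eps0) before time 1, and its piece between the last exit
   from the closed e-ball and the first hit of the eps0-sphere crosses the
   annulus. The image of that piece is a subarc of beta, so rho is admissible
   for beta's family as well. The modulus of the latter is therefore at most
   that of the image family, which the ring Q-inequality with eta = psi / I
   bounds by F / I^alpha. *)

Section lebesgue_translation.
Context {R : realType} (A : R).

Definition translate : measurableTypeR R -> measurableTypeR R := fun y => y - A.

Lemma measurable_translate : measurable_fun [set: measurableTypeR R] translate.
Proof. exact: measurable_funB. Qed.

HB.instance Definition _ :=
  isMeasurableFun.Build _ _ _ _ translate measurable_translate.

Lemma lebesgue_measure_translate (S : set (measurableTypeR R)) : measurable S ->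
  lebesgue_measure (translate @^-1` S) = lebesgue_measure S.
Proof.
move=> mS; rewrite -[LHS]/(pushforward lebesgue_measure translate S).
apply/esym/lebesgue_measure_unique => //= _ [[a b]] _ <-.
rewrite /pushforward (_ : translate @^-1` _ = `]a + A, b + A]%classic); last first.
  apply/seteqP; split => y /=; rewrite /translate !in_itv /= => /andP[h1 h2];
    by apply/andP; split; lra.
rewrite /= !lebesgue_measure_itv /= !lte_fin ltrD2r.
by rewrite -!EFinD opprD addrACA subrr addr0.
Qed.

Variable h : {nnsfun measurableTypeR R >-> R}.

Definition translate_fun : measurableTypeR R -> R := h \o translate.

Let measurable_translate_fun : measurable_fun [set: measurableTypeR R] translate_fun.
Proof. exact: measurableT_comp (measurable_funPT h) measurable_translate. Qed.

Let finite_range_translate_fun : finite_set (range translate_fun).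
Proof. by apply: sub_finite_set (@fimfunP _ _ h) => _ [y _ <-]; exists (translate y). Qed.

Let translate_fun_ge0 x : 0 <= translate_fun x.
Proof. exact: fun_ge0. Qed.

HB.instance Definition _ :=
  isMeasurableFun.Build _ _ _ _ translate_fun measurable_translate_fun.
HB.instance Definition _ := FiniteImage.Build _ _ translate_fun finite_range_translate_fun.
HB.instance Definition _ := isNonNegFun.Build _ _ translate_fun translate_fun_ge0.

Definition translate_nnsfun : {nnsfun measurableTypeR R >-> R} := translate_fun.

Lemma sintegral_translate :
  sintegral lebesgue_measure translate_nnsfun = sintegral lebesgue_measure h.
Proof.
rewrite /sintegral; apply: eq_fsbigr => r _; congr (_ * _)%E.
have /lebesgue_measure_translate : measurable (h @^-1` [set r]).
  by rewrite -[X in measurable X]setTI; apply: (measurable_funPT h).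
by [].
Qed.

End lebesgue_translation.

Lemma ge0_integral_shift_le (R : realType) (F : R -> \bar R) (A L L' : R) :
  (forall x, 0 <= F x)%E -> 0 <= A -> A + L <= L' ->
  (\int[lebesgue_measure]_(s in [set s : R | (0 <= s <= L)%R]) F (s + A)%R <=
   \int[lebesgue_measure]_(s in [set s : R | (0 <= s <= L')%R]) F s)%E.
Proof.
move=> F0 A0 AL; rewrite !ge0_integralE //.
apply: ge_ereal_sup => _ [h hf <-]; apply: ereal_sup_ubound.
exists (translate_nnsfun A h); last exact: sintegral_translate.
move=> y /=; have := hf (y - A); rewrite /patch /translate_nnsfun /translate_fun /translate /=.
case: ifPn => [/set_mem /= /andP[h1 h2]|_] H.
  by rewrite subrK in H; rewrite mem_set //; apply/andP; split; lra.
by apply: le_trans H _; case: ifPn.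
Qed.

(* Unlike ge0_integralZl, no measurability is needed: scaling by k > 0 is a
   bijection between the simple functions below f and those below k * f. *)
Lemma ge0_integralZl_gt0 d (T : measurableType d) (R : realType)
  (mu : {measure set T -> \bar R}) (D : set T) (f : T -> \bar R) (k : R) :
  0 < k -> (forall x, D x -> 0 <= f x)%E ->
  (\int[mu]_(x in D) (k%:E * f x) = k%:E * \int[mu]_(x in D) f x)%E.
Proof.
move=> k0 f0; have k0' : (0 <= k%:E)%E by rewrite lee_fin ltW.
rewrite !ge0_integralE //; last by move=> x Dx; apply: mule_ge0 => //; exact: f0.
rewrite -ereal_sup_pZl //; congr ereal_sup; apply/seteqP; split.
- move=> _ [h hf <-].
  have ki : 0 <= k^-1 by rewrite invr_ge0 ltW.
  exists (sintegral mu (scale_nnsfun h ki)); last first.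
    by rewrite sintegralrM muleA -EFinM mulfV ?mul1e // gt_eqF.
  exists (scale_nnsfun h ki) => // x /=; have := hf x; rewrite /patch.
  case: ifPn => _ H; last first.
    have -> : (point : \bar R) = 0%E by [].
    by rewrite -[0%E](mule0 (k^-1)%:E) EFinM lee_wpmul2l // lee_fin.
  rewrite EFinM -[f x]mul1e -(mulVf (lt0r_neq0 k0)) EFinM -muleA.
  by rewrite lee_wpmul2l // lee_fin.
- move=> _ [_ [h hf <-] <-].
  exists (scale_nnsfun h (ltW k0)); last by rewrite sintegralrM.
  move=> x /=; have := hf x; rewrite /patch; case: ifPn => _ H.
    by rewrite EFinM lee_wpmul2l.
  have p0 : (point : \bar R) = 0%E by [].
  by rewrite p0 in H *; rewrite EFinM -[0%E](mule0 k%:E) lee_wpmul2l.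
Qed.

Section Metric.
Context {R : realType} {T : Type} (d : T -> T -> R) (Hd : is_metric d).

Lemma metric_ge0 x y : 0 <= d x y.
Proof. by case: Hd. Qed.

Lemma metric_refl x : d x x = 0.
Proof. by case: Hd => _ H _ _; apply/H. Qed.

Lemma metric_eq0 x y : d x y = 0 -> x = y.
Proof. by case: Hd => _ H _ _ /H. Qed.

Lemma metricC x y : d x y = d y x.
Proof. by case: Hd. Qed.

Lemma metric_triangle x y z : d x z <= d x y + d y z.
Proof. by case: Hd. Qed.

Lemma metric_lipschitz x y z : `|d y x - d z x| <= d y z.
Proof.
have := metric_triangle y z x; have := metric_triangle z y x.
by rewrite ler_norml (metricC z y) => *; apply/andP; split; lra.
Qed.

Lemma d_open_mball p r : d_open d (mball d p r).
Proof.
move=> x xB; exists (r - d x p); first by rewrite subr_gt0.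
by move=> z; rewrite /mball /= => zB; have := metric_triangle z x p; lra.
Qed.

Lemma mball_sub_closure p r : mball d p r `<=` d_closure d (mball d p r).
Proof. by move=> x xB e e0; exists x => //; rewrite metric_refl. Qed.

Lemma closure_mball_le p r x : d_closure d (mball d p r) x -> d x p <= r.
Proof.
move=> xcl; rewrite leNgt; apply/negP => rx.
have [|y yB xy] := xcl (d x p - r); first by rewrite subr_gt0.
by move: yB; rewrite /mball /=; have := metric_triangle x y p; lra.
Qed.

Lemma closure_mball_subset p r r' : r <= r' ->
  d_closure d (mball d p r) `<=` d_closure d (mball d p r').
Proof.
move=> rr x xcl e e0; have [y yB xy] := xcl e e0; exists y => //.
by move: yB; rewrite /mball /=; lra.
Qed.

Lemma d_compact_cluster (K : set T) (al : R -> T) (S : set R) (c : R) :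
  d_compact d K -> (forall s, s < c -> exists t, [/\ S t, s < t & t < c]) ->
  (forall t, S t -> K (al t)) ->
  exists p, K p /\ forall r, 0 < r -> forall s, s < c ->
    exists t, [/\ S t, s < t, t < c & d (al t) p < r].
Proof.
move=> cK acc inK; apply: contrapT => noclus.
pose F := [set U | exists p r s, [/\ 0 < r, s < c,
   (forall t, S t -> s < t -> t < c -> r <= d (al t) p) & U = mball d p r]].
have Fopen U : F U -> d_open d U by move=> [p [r [s [_ _ _ ->]]]]; exact: d_open_mball.
have Fcover : K `<=` \bigcup_(U in F) U.
  move=> p Kp; apply: contrapT => pF; apply: noclus; exists p; split => // r r0 s sc.
  apply: contrapT => far; apply: pF; exists (mball d p r); last first.
    by rewrite /mball /= metric_refl.
  exists p, r, s; split => // t St st tc; rewrite leNgt; apply/negP => dlt.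
  by apply: far; exists t.
have [n [g [gF Kg]]] := cK F Fopen Fcover.
have avoid m : (m <= n)%N -> exists2 s0, s0 < c &
    forall i, (i < m)%N -> forall t, S t -> s0 < t -> t < c -> ~ g i (al t).
  elim: m => [_|m IH mn]; first by exists (c - 1) => //; lra.
  have [s0 s0c Hs0] := IH (ltnW mn).
  have [p [r [s [r0 sc Hs gm]]]] := gF m mn.
  exists (Num.max s0 s); first by rewrite gt_max s0c sc.
  move=> i; rewrite ltnS leq_eqVlt => /orP[/eqP ->|im] t St; rewrite gt_max => /andP[s0t st] tc.
    by rewrite gm /mball /=; have := Hs t St st tc; lra.
  exact: Hs0 i im t St s0t tc.
have [s0 s0c Hs0] := avoid n (leqnn n).
have [t [St s0t tc]] := acc s0 s0c.
have [i /= ilt gi] := Kg _ (inK t St).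
exact: Hs0 i ilt t St s0t tc gi.
Qed.

End Metric.

Lemma chain_le {R : realType} (t : nat -> R) n :
  (forall i, (i < n)%N -> t i <= t i.+1) ->
  forall i j, (i <= j)%N -> (j <= n)%N -> t i <= t j.
Proof.
move=> tle i j ij jn; elim: j ij jn => [|j IH] ij jn.
  by rewrite leqn0 in ij; rewrite (eqP ij).
case: (ltngtP i j.+1) ij => // [ij|->] _ //.
by apply: le_trans (IH _ _) (tle _ _); rewrite // ltnW.
Qed.

Section CurveLength.
Context {R : realType} {T : Type} (d : T -> T -> R) (Hd : is_metric d).

Definition chord_sums (g : R -> T) (a b : R) : set (\bar R) :=
  [set x | exists (n : nat) (t : nat -> R),
     [/\ t 0%N = a, t n = b, (forall i, (i < n)%N -> t i <= t i.+1) &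
         x = (\sum_(i < n) d (g (t i)) (g (t i.+1)))%:E]].

Lemma curve_lengthE g a b : curve_length d g a b = ereal_sup (chord_sums g a b).
Proof. by []. Qed.

Lemma chord_sums_single g a b : a <= b -> chord_sums g a b (d (g a) (g b))%:E.
Proof.
move=> ab; exists 1%N, (fun i => if i == 0%N then a else b); split => //.
  by move=> i; rewrite ltnS leqn0 => /eqP ->.
by rewrite big_ord1.
Qed.

Lemma chord_sums_refl g a : chord_sums g a a 0%E.
Proof. by exists 0%N, (fun => a); split => //; rewrite big_ord0. Qed.

Lemma curve_length_ge0 g a b : a <= b -> (0 <= curve_length d g a b)%E.
Proof.
move=> ab; rewrite curve_lengthE.
apply: le_trans (@ereal_sup_ubound _ (chord_sums g a b) _ (chord_sums_single g ab)).
by rewrite lee_fin (metric_ge0 Hd).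
Qed.

Lemma chord_sums_cat g a m b x1 x2 :
  chord_sums g a m x1 -> chord_sums g m b x2 -> chord_sums g a b (x1 + x2)%E.
Proof.
move=> [n1 [t1 [t10 t1n mt1 ->]]] [n2 [t2 [t20 t2n mt2 ->]]].
pose u i := if (i <= n1)%N then t1 i else t2 (i - n1)%N.
have uE i : (n1 <= i)%N -> u i = t2 (i - n1)%N.
  move=> h; rewrite /u; case: ifPn => // h2.
  have -> : i = n1 by apply/eqP; rewrite eqn_leq h2 h.
  by rewrite subnn t20 t1n.
exists (n1 + n2)%N, u; split.
- by rewrite /u leq0n.
- by rewrite uE ?leq_addr // addKn.
- move=> i ilt; case: (ltnP i n1) => h.
    by rewrite /u h ltnW //; exact: mt1.
  by rewrite !uE ?(leq_trans h) // subSn //; apply: mt2; rewrite ltn_subLR.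
- rewrite big_split_ord /= EFinD; congr (_ + _)%E; apply/congr1.
    by apply: eq_bigr => i _; rewrite /u /= (ltnW (ltn_ord i)) (ltn_ord i).
  apply: eq_bigr => i _; rewrite /= !uE ?leq_addr //; last by rewrite -addnS leq_addr.
  by rewrite addKn -addnS addKn.
Qed.

(* Insert [m] into the partition: by the triangle inequality the sum can only grow. *)
Lemma chord_sums_split g a m b x : a <= m -> m <= b -> chord_sums g a b x ->
  exists x1 x2, [/\ chord_sums g a m x1, chord_sums g m b x2 & (x <= x1 + x2)%E].
Proof.
move=> am mb [n [t [t0 tn mt ->]]].
pose P i := (i <= n)%N && (t i <= m).
have exP : exists i, P i by exists 0%N; rewrite /P leq0n t0 am.
have ubP i : P i -> (i <= n)%N by case/andP.
have [k /andP[kn tkm] kmax] := ex_maxnP exP ubP.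
case: (ltnP k n) => [kn'|nk]; last first.
  have kn2 : k = n by apply/eqP; rewrite eqn_leq kn nk.
  have mb' : m = b by apply/le_anti; rewrite mb -tn -kn2 tkm.
  exists (\sum_(i < n) d (g (t i)) (g (t i.+1)))%:E, 0%E; split.
  - by exists n, t; split => //; rewrite tn mb'.
  - rewrite mb'; exact: chord_sums_refl.
  - by rewrite adde0.
have mlt : m < t k.+1.
  rewrite ltNge; apply/negP => H; have := kmax k.+1.
  by rewrite /P kn' H => /(_ isT); rewrite ltnn.
exists ((\sum_(i < k) d (g (t i)) (g (t i.+1))) + d (g (t k)) (g m))%:E.
exists (d (g m) (g (t k.+1)) + \sum_(k.+1 <= i < n) d (g (t i)) (g (t i.+1)))%:E.
split.
- exists k.+1, (fun i => if (i <= k)%N then t i else m); split.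
  + by rewrite leq0n.
  + by rewrite ltnn.
  + move=> i; rewrite ltnS => ik; rewrite ik; case: (ltnP i k) => h.
      by apply: mt; exact: ltn_trans h kn'.
    by have -> : i = k by apply/eqP; rewrite eqn_leq ik h.
  + rewrite big_ord_recr /= leqnn ltnn; congr ((_ + _)%:E).
    by apply: eq_bigr => i _; rewrite (ltnW (ltn_ord i)) (ltn_ord i).
- exists (n - k)%N, (fun i => if i == 0%N then m else t (k + i)%N); split.
  + by [].
  + by rewrite subn_eq0 leqNgt kn' /= subnKC // ltnW.
  + move=> [|i] ilt /=; first by rewrite addn1 ltW.
    by rewrite [(k + i.+2)%N]addnS; apply: mt; rewrite -ltn_subRL.
  + rewrite -(subnSK kn') big_ord_recl /= addn1.
    rewrite -[k.+1]add0n big_addn big_mkord.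
    congr ((_ + _)%:E); apply: eq_bigr => i _ /=.
    by rewrite [bump 0 i]/= !addnS addnC.
- rewrite lee_fin -(big_mkord xpredT (fun i => d (g (t i)) (g (t i.+1)))).
  rewrite (big_cat_nat (n:=k.+1)) //= big_mkord big_ord_recr /=.
  have := metric_triangle Hd (g (t k)) (g m) (g (t k.+1)); lra.
Qed.

Lemma curve_length_add g a m b : a <= m -> m <= b ->
  (curve_length d g a b < +oo)%E ->
  curve_length d g a b = (curve_length d g a m + curve_length d g m b)%E.
Proof.
move=> am mb fin.
have L0 := curve_length_ge0 g (le_trans am mb).
have m0 := curve_length_ge0 g am.
have Lf : curve_length d g a b \is a fin_num by rewrite ge0_fin_numE.
move: Lf L0 m0 fin; rewrite !curve_lengthE => Lf L0 m0 fin.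
apply/le_anti/andP; split.
  apply: ge_ereal_sup => x Hx.
  have [x1 [x2 [h1 h2 le]]] := chord_sums_split am mb Hx.
  by apply: le_trans le _; apply: leeD; exact: ereal_sup_ubound.
have stepA x2 : chord_sums g m b x2 ->
    (ereal_sup (chord_sums g a m) <= ereal_sup (chord_sums g a b) - x2)%E.
  move=> h2; apply: ge_ereal_sup => x1 h1.
  by rewrite lee_suber_addr //; apply: ereal_sup_ubound; exact: chord_sums_cat h1 h2.
have s1f : ereal_sup (chord_sums g a m) \is a fin_num.
  rewrite ge0_fin_numE //.
  apply: le_lt_trans (stepA _ (chord_sums_single g mb)) _.
  by move: Lf; case: (ereal_sup (chord_sums g a b)) => // r _; rewrite -EFinB ltry.
rewrite -lee_suber_addl //; apply: ge_ereal_sup => x2 h2.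
by rewrite lee_suber_addl // -lee_suber_addr //; exact: stepA.
Qed.

Lemma curve_length_affine (be ga : R -> T) a b s : a < b -> 0 <= s <= 1 ->
  (forall u, 0 <= u <= 1 -> ga u = be (a + u * (b - a))) ->
  curve_length d ga 0 s = curve_length d be a (a + s * (b - a)).
Proof.
move=> ab /andP[s0 s1] gaE; rewrite !curve_lengthE; congr ereal_sup.
have q0 : 0 < b - a by rewrite subr_gt0.
apply/seteqP; split.
- move=> _ [n [t [t0 tn mt ->]]].
  have tin i : (i <= n)%N -> 0 <= t i <= 1.
    move=> ilen; have := chain_le mt (leq0n i) ilen.
    have := chain_le mt ilen (leqnn n); rewrite t0 tn => h1 h2.
    by rewrite h2 (le_trans h1 s1).
  exists n, (fun i => a + t i * (b - a)); split.
  + by rewrite t0 mul0r addr0.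
  + by rewrite tn.
  + by move=> i ilt; rewrite lerD2l ler_wpM2r ?(ltW q0) ?mt.
  + congr EFin; apply: eq_bigr => i _.
    by rewrite !gaE //; apply: tin; [exact: ltn_ord | exact: ltnW (ltn_ord i)].
- move=> _ [n [u [u0 un mu ->]]].
  have uin i : (i <= n)%N -> a <= u i <= a + s * (b - a).
    move=> ilen; have := chain_le mu (leq0n i) ilen.
    by have := chain_le mu ilen (leqnn n); rewrite u0 un => -> ->.
  have key i : (i <= n)%N -> 0 <= (u i - a) / (b - a) <= 1 /\
      a + (u i - a) / (b - a) * (b - a) = u i.
    move=> /uin /andP[h1 h2]; split; last by rewrite divfK ?gt_eqF // addrC subrK.
    apply/andP; split; first by apply: divr_ge0; rewrite subr_ge0 // ltW.
    rewrite ler_pdivrMr // mul1r.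
    have : s * (b - a) <= b - a by rewrite ler_piMl ?(ltW q0).
    lra.
  exists n, (fun i => (u i - a) / (b - a)); split.
  + by rewrite u0 subrr mul0r.
  + by rewrite un addrC addKr mulfK ?gt_eqF.
  + move=> i ilt; rewrite ler_wpM2r ?invr_ge0 ?(ltW q0) //.
    by rewrite lerD2r; exact: mu.
  + congr EFin; apply: eq_bigr => i _.
    have [k1 e1] := key i (ltnW (ltn_ord i)).
    have [k2 e2] := key i.+1 (ltn_ord i).
    by rewrite !gaE // e1 e2.
Qed.

Lemma curve_length_sub g v u w : v <= u -> u <= w ->
  (curve_length d g v w < +oo)%E ->
  [/\ (curve_length d g v u <= curve_length d g v w)%E,
      (curve_length d g u w <= curve_length d g v w)%E,
      curve_length d g v u \is a fin_num &
      curve_length d g u w \is a fin_num].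
Proof.
move=> vu uw fin; have e := curve_length_add vu uw fin.
have h1 := curve_length_ge0 g vu; have h2 := curve_length_ge0 g uw.
have c1 : (curve_length d g v u <= curve_length d g v w)%E by rewrite e leeDl.
have c2 : (curve_length d g u w <= curve_length d g v w)%E by rewrite e leeDr.
by split => //; rewrite ge0_fin_numE //; exact: le_lt_trans fin.
Qed.

Lemma subcurve_length (be ga : R -> T) a b : 0 <= a -> a < b -> b <= 1 ->
  rectifiable d be ->
  (forall u, 0 <= u <= 1 -> ga u = be (a + u * (b - a))) ->
  [/\ rectifiable d ga,
      (forall s, 0 <= s <= 1 -> fine (curve_length d be 0 a) +
          fine (curve_length d ga 0 s) = fine (curve_length d be 0 (a + s * (b - a)))),
      0 <= fine (curve_length d be 0 a) &
      fine (curve_length d be 0 a) + fine (curve_length d ga 0 1) <=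
        fine (curve_length d be 0 1)].
Proof.
move=> a0 ab b1 rb gaE.
have uin s : 0 <= s <= 1 -> a <= a + s * (b - a) <= b.
  move=> /andP[s0 s1]; have q0 : 0 <= b - a by rewrite subr_ge0 ltW.
  have : s * (b - a) <= b - a by rewrite ler_piMl.
  have : 0 <= s * (b - a) by exact: mulr_ge0.
  by move=> *; apply/andP; split; lra.
have split_at s : 0 <= s <= 1 ->
    [/\ curve_length d ga 0 s = curve_length d be a (a + s * (b - a)),
        curve_length d be 0 (a + s * (b - a)) =
          (curve_length d be 0 a + curve_length d be a (a + s * (b - a)))%E,
        curve_length d be 0 a \is a fin_num &
        curve_length d be a (a + s * (b - a)) \is a fin_num].
  move=> sin; have /andP[u1 u2] := uin s sin.
  have [c1 _ f1 _] := curve_length_sub (le_trans a0 u1) (le_trans u2 b1) rb.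
  have [_ _ f2 f3] := curve_length_sub a0 u1 (le_lt_trans c1 rb).
  split => //; first exact: curve_length_affine.
  exact: curve_length_add a0 u1 (le_lt_trans c1 rb).
have [e1 e2 f1 f2] := split_at 1 ltac:(by rewrite ler01 lexx).
rewrite mul1r addrC subrK in e1 e2 f2.
have [cb _ fb _] := curve_length_sub (le_trans a0 (ltW ab)) b1 rb.
split.
- rewrite /rectifiable e1; apply: le_lt_trans rb; apply: le_trans cb.
  by rewrite e2 leeDr // curve_length_ge0.
- by move=> s sin; have [-> -> g3 g4] := split_at s sin; rewrite fineD.
- exact/fine_ge0/curve_length_ge0.
- rewrite e1 -fineD // -e2; apply: fine_le => //.
  by rewrite ge0_fin_numE ?curve_length_ge0.
Qed.

End CurveLength.

Definition cont_itv {R : realType} (phi : R -> R) (a b : R) :=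
  forall t, a <= t <= b -> forall e, 0 < e -> exists2 del, 0 < del &
    forall s, a <= s <= b -> `|s - t| < del -> `|phi s - phi t| < e.

Lemma cont_itvN {R : realType} (phi : R -> R) a b :
  cont_itv phi a b -> cont_itv (fun s => - phi s) a b.
Proof.
move=> c t ht e e0; have [del del0 H] := c t ht e e0; exists del => // s hs sd.
by rewrite -opprD normrN; exact: H.
Qed.

Lemma cont_itv_lt_near {R : realType} (phi : R -> R) a b t v :
  cont_itv phi a b -> a <= t <= b -> phi t < v ->
  exists2 del, 0 < del & forall s, a <= s <= b -> `|s - t| < del -> phi s < v.
Proof.
move=> c tab ptv; have [|del del0 H] := c t tab (v - phi t); first by rewrite subr_gt0.
by exists del => // s sab st; have := H s sab st; rewrite ltr_norml; lra.
Qed.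

Lemma first_hitting_time {R : realType} (phi : R -> R) a b v :
  a <= b -> cont_itv phi a b -> phi a < v -> v <= phi b ->
  exists T, [/\ a < T <= b, phi T = v & forall t, a <= t < T -> phi t < v].
Proof.
move=> ab c pa pb.
pose G := [set t | a <= t <= b /\ forall u, a <= u <= t -> phi u < v].
have Ga : G a.
  split=> [|u /andP[au ua]]; first by rewrite lexx ab.
  by have -> : u = a by apply/le_anti; rewrite au ua.
have hG : has_sup G by split; [exists a | exists b => t [/andP[]]].
set T := sup G.
have aT : a <= T by exact: sup_upper_bound.
have Tb : T <= b by apply: ge_sup; [exists a | move=> t [/andP[]]].
have TT : a <= T <= b by rewrite aT Tb.
have below t : a <= t < T -> phi t < v.
  move=> /andP[ta tT]; have e0 : 0 < T - t by rewrite subr_gt0.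
  have [g [_ Hg] gt] := sup_adherent e0 hG.
  by apply: Hg; rewrite ta /=; move: gt; rewrite -/T; lra.
have phiT : phi T = v.
  case: (ltgtP (phi T) v) => // pTv.
  - have Tb' : T < b by rewrite lt_neqAle Tb andbT; apply: contraTneq pb => <-; rewrite -ltNge.
    have [del del0 H] := cont_itv_lt_near c TT pTv.
    pose t' := Num.min (T + del / 2) b.
    have Tt' : T < t' by rewrite lt_min Tb' andbT; lra.
    have t'b : t' <= b by rewrite ge_min lexx orbT.
    have t'T : t' <= T + del / 2 by rewrite ge_min lexx.
    have : G t'.
      split=> [|u /andP[au ut']]; first by rewrite t'b andbT; lra.
      case: (ltP u T) => uT; first by apply: below; rewrite au uT.
      apply: H; first by rewrite au (le_trans ut' t'b).
      by rewrite ltr_norml; apply/andP; split; lra.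
    by move=> /(sup_upper_bound hG); rewrite -/T; lra.
  - have aT' : a < T by rewrite lt_neqAle aT andbT; apply: contraTneq pa => ->; rewrite -leNgt ltW.
    have [|del del0 H] := cont_itv_lt_near (cont_itvN c) TT (v := - v); first by rewrite ltrN2.
    pose t' := Num.max (T - del / 2) a.
    have t'a : a <= t' by rewrite le_max lexx orbT.
    have t'T : t' < T by rewrite gt_max aT' andbT; lra.
    have Tt' : T - del / 2 <= t' by rewrite le_max lexx.
    have : - phi t' < - v.
      apply: H; first by rewrite t'a (le_trans (ltW t'T) Tb).
      by rewrite ltr_norml; apply/andP; split; lra.
    by rewrite ltrN2; have := below t'; rewrite t'a t'T => /(_ isT); lra.
exists T; split => //.
by rewrite lt_neqAle aT Tb !andbT; apply: contraTneq pa => ->; rewrite phiT ltxx.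
Qed.

Lemma cont_itv_subset {R : realType} (phi : R -> R) a b a' b' :
  a <= a' -> b' <= b -> cont_itv phi a b -> cont_itv phi a' b'.
Proof.
move=> aa bb c t /andP[h1 h2] e e0.
have ht : a <= t <= b by apply/andP; split; [exact: le_trans h1|exact: le_trans bb].
have [del del0 H] := c t ht e e0; exists del => // s /andP[s1 s2] sd.
apply: H sd; apply/andP; split; [exact: le_trans s1|exact: le_trans bb].
Qed.

Lemma cont_itv_reflect {R : realType} (phi : R -> R) a b :
  cont_itv phi a b -> cont_itv (fun s => - phi (a + b - s)) a b.
Proof.
move=> c t /andP[h1 h2] e e0.
have ht : a <= a + b - t <= b by apply/andP; split; lra.
have [del del0 H] := c _ ht e e0; exists del => // s /andP[s1 s2] sd.
have hs : a <= a + b - s <= b by apply/andP; split; lra.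
have sd' : `|(a + b - s) - (a + b - t)| < del.
  by rewrite (_ : _ - _ = - (s - t)) ?normrN //; ring.
by rewrite -opprD normrN; exact: H _ hs sd'.
Qed.

Lemma last_hitting_time {R : realType} (phi : R -> R) a b v : a <= b -> cont_itv phi a b ->
  phi a <= v -> v < phi b ->
  exists T, [/\ a <= T < b, phi T = v & forall t, T < t <= b -> v < phi t].
Proof.
move=> ab c pa pb.
have c' := cont_itv_reflect c.
have h1 : - phi (a + b - a) < - v by rewrite (_ : a + b - a = b) ?ltrN2 //; ring.
have h2 : - v <= - phi (a + b - b) by rewrite (_ : a + b - b = a) ?lerN2 //; ring.
have [T [/andP[aT Tb] pT Hb]] := first_hitting_time ab c' h1 h2.
exists (a + b - T); split.
- apply/andP; split; lra.
- by move/eqP: pT; rewrite eqr_opp => /eqP.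
- move=> t /andP[t1 t2].
  have hs : a <= a + b - t < T by apply/andP; split; lra.
  have := Hb _ hs; rewrite (_ : a + b - (a + b - t) = t); last by ring.
  by rewrite ltrN2.
Qed.

Lemma ivt_decreasing {R : realType} (phi : R -> R) a b v : a <= b -> cont_itv phi a b ->
  phi b < v -> v < phi a -> exists T, a < T <= b /\ phi T = v.
Proof.
move=> ab c pb pa.
have c' := cont_itvN c.
have h1 : - phi a < - v by rewrite ltrN2.
have h2 : - v <= - phi b by rewrite lerN2 ltW.
have [T [hT pT _]] := first_hitting_time ab c' h1 h2.
by exists T; split => //; move/eqP: pT; rewrite eqr_opp => /eqP.
Qed.

Lemma cont_on_subset {R : realType} {T : Type} (d : T -> T -> R) (g : R -> T)
    (I J : set R) :
  J `<=` I -> cont_on d g I -> cont_on d g J.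
Proof.
move=> JI c t Jt e e0; have [del del0 H] := c t (JI t Jt) e e0.
by exists del => // s Js; apply: H; exact: JI.
Qed.

Section CurvesInMetricSpace.
Context {R : realType} {T : Type} (d : T -> T -> R) (Hd : is_metric d).

Lemma cont_itv_dist (al : R -> T) (c t1 t2 : R) (p : T) :
  0 <= t1 -> t2 < c -> cont_on d al [set t | 0 <= t < c] ->
  cont_itv (fun t => d (al t) p) t1 t2.
Proof.
move=> t10 t2c alc t /andP[h1 h2] e e0.
have ht : 0 <= t < c by apply/andP; split; lra.
have [del del0 H] := alc t ht e e0; exists del => // s /andP[s1 s2] sd.
have hs : 0 <= s < c by apply/andP; split; lra.
exact: le_lt_trans (metric_lipschitz Hd _ _ _) (H s hs sd).
Qed.

Lemma is_curve_affine (al : R -> T) (c T0 T1 : R) :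
  cont_on d al [set t | 0 <= t < c] -> 0 <= T0 -> T0 < T1 -> T1 < c ->
  is_curve d (fun s => al (T0 + s * (T1 - T0))).
Proof.
move=> alc T00 T01 T1c s s01 e e0.
have q0 : 0 < T1 - T0 by rewrite subr_gt0.
have inc u : 0 <= u <= 1 -> 0 <= T0 + u * (T1 - T0) < c.
  move=> /andP[u0 u1]; have : u * (T1 - T0) <= T1 - T0 by rewrite ler_piMl // ltW.
  have : 0 <= u * (T1 - T0) by rewrite mulr_ge0 // ltW.
  by move=> *; apply/andP; split; lra.
have [del del0 H] := alc _ (inc s s01) e e0.
exists (del / (T1 - T0)); first by rewrite divr_gt0.
move=> s' /= s'01 sd; apply: H; first exact: inc.
rewrite (_ : _ - _ = (s' - s) * (T1 - T0)); last by ring.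
by rewrite normrM (gtr0_norm q0) -ltr_pdivlMr.
Qed.

Lemma d_compact_cluster_left (K : set T) (al : R -> T) (c : R) :
  d_compact d K -> 0 < c -> (forall t, 0 <= t < c -> K (al t)) ->
  exists p, K p /\ forall r, 0 < r -> forall s, s < c ->
    exists t, [/\ 0 <= t < c, s < t, t < c & d (al t) p < r].
Proof.
move=> cK c0 inK; apply: (d_compact_cluster Hd cK) inK => s sc.
have sc' : Num.max s 0 < c by rewrite gt_max sc c0.
have ss : s <= Num.max s 0 by rewrite le_max lexx.
have s0 : 0 <= Num.max s 0 by rewrite le_max lexx orbT.
by exists ((Num.max s 0 + c) / 2); split; [apply/andP; split|..]; lra.
Qed.

Lemma cluster_dist_between (al : R -> T) (S : set R) (c : R) (p q : T) (lo hi : R) :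
  (forall t, S t -> lo <= d (al t) p <= hi) ->
  (forall r, 0 < r -> forall s, s < c ->
    exists t, [/\ S t, s < t, t < c & d (al t) q < r]) ->
  lo <= d q p <= hi.
Proof.
move=> Sdist clq; have c1 : c - 1 < c by lra.
apply/andP; split; rewrite leNgt; apply/negP => h.
- have [|t [/Sdist /andP[lot _] _ _ tq]] := clq (lo - d q p) _ _ c1; first by lra.
  by have := metric_triangle Hd (al t) q p; lra.
- have [|t [/Sdist /andP[_ thi] _ _ tq]] := clq (d q p - hi) _ _ c1; first by lra.
  by have := metric_triangle Hd q (al t) p; rewrite (metricC Hd q (al t)); lra.
Qed.

(* Intermediate value theorem between a far time and a later near time. *)
Lemma shell_crossing_times (al : R -> T) (c : R) (p : T) (r r' : R) :
  cont_on d al [set t | 0 <= t < c] -> 0 < r' -> r' <= r ->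
  (forall s, s < c -> exists t, [/\ s < t, t < c & r <= d (al t) p]) ->
  (forall r, 0 < r -> forall s, s < c ->
     exists t, [/\ 0 <= t < c, s < t, t < c & d (al t) p < r]) ->
  forall s, s < c -> exists t,
    [/\ 0 <= t < c /\ r' / 2 <= d (al t) p <= r', s < t & t < c].
Proof.
move=> alc r'0 r'r far clus s sc.
have c0 : 0 < c.
  by have [t [/andP[t0 tc] _ _ _]] := clus 1 ltr01 s sc; exact: le_lt_trans tc.
have sc' : Num.max s 0 < c by rewrite gt_max sc c0.
have [t1 [st1 t1c dt1]] := far _ sc'.
move: st1; rewrite gt_max => /andP[st1 t10].
have [|t2 [_ t12 t2c dt2]] := clus (r' / 2) _ t1 t1c; first by lra.
have i2 : d (al t2) p < 3 * r' / 4 by lra.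
have i1 : 3 * r' / 4 < d (al t1) p by lra.
have [T0 [/andP[t1T0 T0t2] dT0]] :=
  ivt_decreasing (ltW t12) (cont_itv_dist p (ltW t10) t2c alc) i2 i1.
by exists T0; rewrite dT0; split; try lra; split; apply/andP; split; lra.
Qed.

End CurvesInMetricSpace.

(* Condition A lifts curves defined on half-open intervals [[a, b)]; extending
   a curve on [[0, 1]] constantly to [[0, 2)] lets a lifting reach time 1. *)
Definition clamp_curve {R : realType} {T : Type} (be : R -> T) (t : R) : T :=
  be (if t <= 1 then t else 1).

Lemma cont_on_clamp {R : realType} {T : Type} (d : T -> T -> R) (be : R -> T) :
  is_curve d be -> cont_on d (clamp_curve be) [set t | 0 <= t < 2].
Proof.
move=> cb t /= /andP[t0 t2] e e0.
have ht' : 0 <= (if t <= 1 then t else 1) <= 1.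
  by case: ifPn => h; apply/andP; split => //; lra.
have [del del0 H] := cb _ ht' e e0; exists del => // s /= /andP[s0 s2] sd.
apply: H; first by rewrite /=; case: ifPn => h; apply/andP; split => //; lra.
move: sd; rewrite !ltr_norml.
by case: ifPn => h1; case: ifPn => h2 /andP[h3 h4]; apply/andP; split; lra.
Qed.

Definition annulus_family {R : realType} {T : Type} (d : T -> T -> R) (D : set T)
    (x0 : T) (r1 r2 : R) : set (R -> T) :=
  [set g | curve_family d (msphere d x0 r1) (msphere d x0 r2) (mannulus d x0 r1 r2) g /\
           forall t : R, 0 <= t <= 1 -> D (g t)].

Section Lifting.
Context {R : realType} {T T' : Type} (d : T -> T -> R) (d' : T' -> T' -> R)
  (Hd : is_metric d) (Hd' : is_metric d') (D : set T) (f : T -> T').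
Hypotheses (Hfc : cont_map_on d d' D f) (Hfd : discrete_map_on d D f)
  (HA : condition_A d d' D f).

Lemma lift_cluster_value (be : R -> T') (b c : R) (al : R -> T) (S : set R) (p : T) :
  0 <= c < b -> cont_on d' be [set t | 0 <= t < b] ->
  (forall t, S t -> 0 <= t < c) ->
  (forall t, 0 <= t < c -> D (al t) /\ f (al t) = be t) -> D p ->
  (forall r, 0 < r -> forall s, s < c ->
    exists t, [/\ S t, s < t, t < c & d (al t) p < r]) ->
  f p = be c.
Proof.
move=> cb bc Sc lift Dp clus; apply: contrapT => fpc.
have dpos : 0 < d' (f p) (be c).
  rewrite lt_neqAle (metric_ge0 Hd') andbT eq_sym.
  by apply/eqP => /(metric_eq0 Hd').
have gap : 0 < d' (f p) (be c) / 2 by lra.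
have [del1 del10 H1] := Hfc Dp gap.
have [del2 del20 H2] := bc c cb _ gap.
have [t [St st tc dt]] := clus del1 del10 (c - del2) ltac:(by rewrite gtrDl oppr_lt0).
have tc' := Sc t St; have [Dt ft] := lift t tc'.
have := H1 (al t) Dt dt.
have t02 : 0 <= t < b by move: tc' cb => /andP[? ?] /andP[? ?]; apply/andP; split; lra.
have := H2 t t02 ltac:(by rewrite ltr_norml; apply/andP; split; lra).
have := metric_triangle Hd' (f p) (f (al t)) (be c).
by rewrite -ft (metricC Hd' (f p) (f (al t))); lra.
Qed.

(* A cluster point [p] of the lifting at [c] is its limit: otherwise the
   lifting oscillates and has a second cluster point [q], at distance between
   [r'/2] and [r'] from [p], with [f q = f p]; for small [r'] this
   contradicts the discreteness of [f] at [p]. *)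
Lemma lift_converges (K : set T) (be : R -> T') (b c : R) (al : R -> T) (p : T) :
  d_compact d K -> K `<=` D -> 0 <= c < b -> cont_on d' be [set t | 0 <= t < b] ->
  cont_on d al [set t | 0 <= t < c] ->
  (forall t, 0 <= t < c -> [/\ D (al t), f (al t) = be t & K (al t)]) -> K p ->
  (forall r, 0 < r -> forall s, s < c ->
     exists t, [/\ 0 <= t < c, s < t, t < c & d (al t) p < r]) ->
  forall r, 0 < r -> exists2 s, s < c & forall t, s < t < c -> d (al t) p < r.
Proof.
move=> cK KD cb bc alc lift Kp clus r r0.
have lift' t : 0 <= t < c -> D (al t) /\ f (al t) = be t by case/lift.
have fp : f p = be c := lift_cluster_value cb bc (fun t tc => tc) lift' (KD p Kp) clus.
have [rp rp0 discr] := Hfd (KD p Kp).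
apply: contrapT => noconv.
pose r' := Num.min r (rp / 2).
have r'0 : 0 < r' by rewrite lt_min r0 divr_gt0.
have r'r : r' <= r by rewrite ge_min lexx.
have r'rp : r' < rp by rewrite gt_min; apply/orP; right; lra.
have far s : s < c -> exists t, [/\ s < t, t < c & r <= d (al t) p].
  move=> sc; apply: contrapT => H; apply: noconv; exists s => // t /andP[st tc].
  by rewrite ltNge; apply/negP => h; apply: H; exists t.
have inK t : 0 <= t < c /\ r' / 2 <= d (al t) p <= r' -> K (al t) by move=> [/lift[]].
have [q [Kq clq]] :=
  d_compact_cluster Hd cK (shell_crossing_times Hd alc r'0 r'r far clus) inK.
have fq : f q = be c by apply: lift_cluster_value cb bc _ lift' (KD q Kq) clq => t [].
have /andP[dq1 dq2] : r' / 2 <= d q p <= r'.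
  by apply: (cluster_dist_between Hd _ clq) => t [].
have qp : q = p by apply: discr; [exact: KD | rewrite fq fp | lra].
by move: dq1; rewrite qp (metric_refl Hd); lra.
Qed.

Lemma cont_on_concat (g1 g2 : R -> T) (c c2 : R) (p : T) : 0 < c -> c < c2 ->
  cont_on d g1 [set t | 0 <= t < c] -> cont_on d g2 [set t | c <= t < c2] ->
  g2 c = p ->
  (forall r, 0 < r -> exists2 s, s < c & forall t, s < t < c -> d (g1 t) p < r) ->
  cont_on d (fun t => if t < c then g1 t else g2 t) [set t | 0 <= t < c2].
Proof.
move=> c0 cc2 k1 k2 g2c conv t /andP[t0 tc2] e e0.
case: (ltgtP t c) => tc.
- have [del del0 H] := k1 t ltac:(by rewrite /= t0 tc) e e0.
  exists (Num.min del (c - t)); first by rewrite lt_min del0 subr_gt0.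
  move=> s /andP[s0 sc2]; rewrite lt_min => /andP[sd].
  rewrite ltr_norml => /andP[_ sct]; have sc : s < c by lra.
  by rewrite sc; apply: H => //; rewrite /= s0 sc.
- have [del del0 H] := k2 t ltac:(by rewrite /= tc2 ltW) e e0.
  exists (Num.min del (t - c)); first by rewrite lt_min del0 subr_gt0.
  move=> s /andP[s0 sc2]; rewrite lt_min => /andP[sd].
  rewrite ltr_norml => /andP[cs _]; have cs' : c <= s by lra.
  have -> : (s < c) = false by apply/negbTE; rewrite -leNgt.
  by apply: H => //; rewrite /= cs' sc2.
- subst t; have [del del0 H] := k2 c ltac:(by rewrite /= lexx cc2) e e0.
  have [s0 s0c Hs0] := conv e e0.
  exists (Num.min del (c - s0)); first by rewrite lt_min del0 subr_gt0.
  move=> s /andP[_ sc2]; rewrite lt_min => /andP[sd].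
  rewrite ltr_norml => /andP[s0s _].
  case: ifPn => sc; first by rewrite g2c; apply: Hs0; apply/andP; split; lra.
  by apply: H => //; rewrite /= sc2 andbT leNgt.
Qed.

Lemma lifting_extends (K : set T) (be : R -> T') (x : T) (b c : R) (al : R -> T) :
  d_compact d K -> K `<=` D -> 0 < c < b -> cont_on d' be [set t | 0 <= t < b] ->
  is_lifting d D f be x 0 c al -> (forall t, 0 <= t < c -> K (al t)) ->
  exists (c' : R) (al' : R -> T), [/\ c < c' <= b, is_lifting d D f be x 0 c' al' &
    forall t, 0 <= t < c -> al' t = al t].
Proof.
move=> cK KD /andP[c0 cb] bc [al0 alc alD alf] inK.
have [p [Kp clp]] := d_compact_cluster_left Hd cK c0 inK.
have cb' : 0 <= c < b by rewrite (ltW c0) cb.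
have lift t : 0 <= t < c -> [/\ D (al t), f (al t) = be t & K (al t)].
  by move=> tc; split; [exact: alD | exact: alf | exact: inK].
have conv := lift_converges cK KD cb' bc alc lift Kp clp.
have fp : f p = be c.
  by apply: (lift_cluster_value cb' bc _ _ (KD p Kp) clp) => // t /lift[].
have bc2 : cont_on d' be [set t | c <= t < b].
  by apply: cont_on_subset bc => t /andP[ct tb]; rewrite /= tb (le_trans (ltW c0)).
have [c' [al2 [/andP[cc' c'b] [al20 al2c al2D al2f] _]]] := HA cb bc2 (KD p Kp) fp.
exists c', (fun t => if t < c then al t else al2 t); split => //.
- by rewrite cc'.
- split; [by rewrite c0 | exact: cont_on_concat c0 cc' alc al2c al20 conv | |].
  + move=> t /andP[t0 tc']; case: ifPn => tc; first by apply: alD; rewrite t0.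
    by apply: al2D; rewrite tc' leNgt tc.
  + move=> t /andP[t0 tc']; case: ifPn => tc; first by apply: alf; rewrite t0.
    by apply: al2f; rewrite tc' leNgt tc.
- by move=> t /andP[_ ->].
Qed.

(* A lifting that stays in the compact ball until time [min(c, 1)] could be
   extended past [c], so a maximal lifting must leave the ball before time 1
   unless [be 1] lies in [f(B(x0, eps0))]. *)
Lemma maximal_lifting_exits_ball (x0 : T) (eps0 : R) (be : R -> T') (x : T) (c : R)
    (al : R -> T) :
  d_compact d (d_closure d (mball d x0 eps0)) ->
  d_closure d (mball d x0 eps0) `<=` D ->
  is_curve d' be -> ~ (f @` mball d x0 eps0) (be 1) ->
  maximal_lifting d D f (clamp_curve be) x 0 2 c al ->
  exists ts, [/\ 0 <= ts, ts < c, ts <= 1 & eps0 <= d (al ts) x0].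
Proof.
move=> cK KD cb nb [/andP[c0 c2] lift nomax]; apply: contrapT => stays.
have inB t : 0 <= t < c -> t <= 1 -> d (al t) x0 < eps0.
  by move=> /andP[t0 tc] t1; rewrite ltNge; apply/negP => h; apply: stays; exists t.
case: (ltP 1 c) => c1.
  apply: nb; exists (al 1); first by apply: inB; rewrite ?ler01 ?c1.
  by case: lift => _ _ _ ->; rewrite ?ler01 ?c1 // /clamp_curve lexx.
apply: nomax; apply: (lifting_extends cK KD _ (cont_on_clamp cb) lift).
  by rewrite c0 (le_lt_trans c1) //; lra.
move=> t /andP[t0 tc]; apply: (mball_sub_closure Hd); apply: inB.
  by rewrite t0 tc.
by apply: le_trans c1; exact: ltW.
Qed.

(* The lifting leaves the closed ball [d(., x0) <= e] for the last time at
   [T0] and reaches the sphere of radius [eps0] for the first time at [T1]. *)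
Lemma lift_annulus_crossing (x0 : T) (eps0 e : R) (be : R -> T') (x : T) :
  d_compact d (d_closure d (mball d x0 eps0)) ->
  d_closure d (mball d x0 eps0) `<=` D ->
  0 < e -> e < eps0 ->
  is_curve d' be -> D x -> d x x0 <= e -> f x = be 0 ->
  ~ (f @` mball d x0 eps0) (be 1) ->
  exists a b (g : R -> T), [/\ 0 <= a, a < b, b <= 1, annulus_family d D x0 e eps0 g &
     forall s, 0 <= s <= 1 -> f (g s) = be (a + s * (b - a))].
Proof.
move=> cK KD e0 ee cb Dx dx fx nb.
have fx' : f x = clamp_curve be 0 by rewrite /clamp_curve ler01.
have lt02 : (0 : R) < 2 by lra.
have [c [al maxl]] := HA lt02 (cont_on_clamp cb) Dx fx'.
have [ts [ts0 tsc ts1 dts]] := maximal_lifting_exits_ball cK KD cb nb maxl.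
case: maxl => /andP[c0 c2] [al0 alc alD alf] _.
pose phi t := d (al t) x0.
have cphi : cont_itv phi 0 ts := cont_itv_dist Hd x0 (lexx 0) tsc alc.
have phi0 : phi 0 = d x x0 by rewrite /phi al0.
have phi0eps : phi 0 < eps0 by rewrite phi0; lra.
have [T1 [/andP[T10 T1ts] pT1 bT1]] := first_hitting_time ts0 cphi phi0eps dts.
have phi0e : phi 0 <= e by rewrite phi0.
have phiT1 : e < phi T1 by rewrite pT1.
have [T0 [/andP[T00 T01] pT0 aT0]] :=
  last_hitting_time (ltW T10) (cont_itv_subset (lexx 0) T1ts cphi) phi0e phiT1.
have T1c : T1 < c := le_lt_trans T1ts tsc.
have T11 : T1 <= 1 := le_trans T1ts ts1.
have uin s : 0 <= s <= 1 -> T0 <= T0 + s * (T1 - T0) <= T1.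
  move=> /andP[s0 s1]; have q0 : 0 <= T1 - T0 by rewrite subr_ge0 ltW.
  have : s * (T1 - T0) <= T1 - T0 by rewrite ler_piMl.
  have : 0 <= s * (T1 - T0) by rewrite mulr_ge0.
  by move=> *; apply/andP; split; lra.
have uc s : 0 <= s <= 1 -> 0 <= T0 + s * (T1 - T0) < c.
  by move=> /uin /andP[h1 h2]; apply/andP; split; lra.
exists T0, T1, (fun s => al (T0 + s * (T1 - T0))); split => //.
- split; last by move=> t /uc /alD.
  split.
  + exact: is_curve_affine alc T00 T01 T1c.
  + by rewrite /msphere /= mul0r addr0.
  + by rewrite /msphere /= mul1r addrC subrK.
  + move=> t /andP[t0 t1]; rewrite /mannulus /=.
    have h1 : 0 < t * (T1 - T0) by rewrite mulr_gt0 // subr_gt0.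
    have h2 : t * (T1 - T0) < T1 - T0 by rewrite gtr_pMl // subr_gt0.
    by apply/andP; split; [apply: aT0 | apply: bT1]; apply/andP; split; lra.
- move=> s s01; rewrite alf ?uc //; have /andP[_ h] := uin s s01.
  by rewrite /clamp_curve (le_trans h T11).
Qed.

End Lifting.

Lemma modulus_le {R : realType} {dsp : measure_display} {T : measurableType dsp}
    (d : T -> T -> R) (mu : {measure set T -> \bar R}) (p : R) (G1 G2 : set (R -> T)) :
  (forall rho, admissible d G1 rho -> admissible d G2 rho) ->
  (modulus d mu p G2 <= modulus d mu p G1)%E.
Proof. by move=> G12; apply: le_ereal_inf => _ [rho /G12 arho <-]; exists rho. Qed.

Lemma inv_powR {R : realType} (x r : R) : 0 < x -> x^-1 `^ r = (x `^ r)^-1.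
Proof.
move=> x0; apply: (@mulIf _ (x `^ r)); first by rewrite gt_eqF // powR_gt0.
by rewrite -powRM ?invr_ge0 ?ltW // mulVf ?gt_eqF // powR1 mulVf // gt_eqF // powR_gt0.
Qed.

Section ImageOfAnnulusFamily.
Context {R : realType} {dsp dsp' : measure_display}
  {X : measurableType dsp} {X' : measurableType dsp'}
  (d : X -> X -> R) (d' : X' -> X' -> R) (Hd : is_metric d) (Hd' : is_metric d')
  (D : set X) (f : X -> X').
Hypotheses (Hfc : cont_map_on d d' D f) (Hfo : open_map_on d d' D f)
  (Hfd : discrete_map_on d D f) (HA : condition_A d d' D f).

(* A rectifiable curve from [f(closed ball)] to the boundary of [f(B(x0, eps0))]
   contains the image of a curve crossing the annulus; its line integral
   dominates the one along that subcurve. *)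
Lemma image_annulus_family_minorizes (x0 : X) (eps0 e : R) :
  d_compact d (d_closure d (mball d x0 eps0)) -> d_closure d (mball d x0 eps0) `<=` D ->
  0 < e -> e < eps0 ->
  forall rho, admissible d' (image_family f (annulus_family d D x0 e eps0)) rho ->
  admissible d' (curve_family d' (f @` d_closure d (mball d x0 e))
                   (d_boundary d' (f @` mball d x0 eps0)) setT) rho.
Proof.
move=> cK KD e0 eeps rho [rho0 mrho rhoG]; split => // be [cb [x xcl fx] be1 _] rb h nh.
have Dx : D x by apply/KD/(closure_mball_subset (ltW eeps)).
have BD : mball d x0 eps0 `<=` D by move=> y /(mball_sub_closure Hd) /KD.
have nb : ~ (f @` mball d x0 eps0) (be 1).
  by move=> fB; case: be1 => _; apply; exact: (Hfo BD (d_open_mball Hd (p:=x0) (r:=eps0)) fB).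
have [a [b [g [a0 ab b1 Gg fg]]]] :=
  lift_annulus_crossing Hd Hd' Hfc Hfd HA cK KD e0 eeps cb Dx (closure_mball_le Hd xcl) fx nb.
have fgE u : 0 <= u <= 1 -> (f \o g) u = be (a + u * (b - a)) by move=> /fg.
have [rg lenE A0 lenle] := subcurve_length Hd' a0 ab b1 rb fgE.
set A := fine (curve_length d' be 0 a) in lenE A0 lenle.
have nh' : normal_rep d' (f \o g) (fun s => h (s + A)).
  move=> t t01; have /andP[t0 t1] := t01; rewrite /= addrC lenE // nh ?fg //.
  have : 0 <= t * (b - a) by rewrite mulr_ge0 // subr_ge0 ltW.
  have : t * (b - a) <= b - a by rewrite ler_piMl // subr_ge0 ltW.
  by move=> *; apply/andP; split; lra.
apply: le_trans (rhoG _ (ex_intro2 _ _ g Gg erefl) rg _ nh') _.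
exact: ge0_integral_shift_le (fun s => rho0 (h s)) A0 lenle.
Qed.

End ImageOfAnnulusFamily.

Lemma ring_Q_map_modulus_le {R : realType} {dsp dsp' : measure_display}
    {X : measurableType dsp} {X' : measurableType dsp'}
    (d : X -> X -> R) (d' : X' -> X' -> R)
    (mu : {measure set X -> \bar R}) (mu' : {measure set X' -> \bar R})
    (alpha alpha' : R) (D : set X) (f : X -> X') (Q : X -> \bar R) (x0 : X)
    (r1 r2 : R) (psi : lebR R -> \bar R) :
  ring_Q_map d d' mu mu' alpha alpha' D f Q x0 ->
  0 < r1 -> r1 < r2 -> mannulus d x0 r1 r2 `<=` D -> (forall x, D x -> (0 <= Q x)%E) ->
  measurable_fun [set t : lebR R | (r1 < t < r2)%R] psi ->
  (forall t : lebR R, r1 < t < r2 -> (0 <= psi t)%E) ->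
  (0 < \int[completed_lebesgue_measure]_(t in [set t : lebR R | (r1 < t < r2)%R]) psi t
     < +oo)%E ->
  (modulus d' mu' alpha' (image_family f (annulus_family d D x0 r1 r2))
   <= \int[mu]_(x in mannulus d x0 r1 r2) (Q x * psi (d x x0) `^ alpha) *
      ((fine (\int[completed_lebesgue_measure]_(t in [set t : lebR R | (r1 < t < r2)%R])
                psi t) `^ alpha)^-1)%:E)%E.
Proof.
set I := (\int[completed_lebesgue_measure]_(t in _) psi t)%E.
move=> ring r10 r12 AD Q0 mpsi psi0 /andP[I0 Ioo].
have Ipos : 0 < fine I by rewrite fine_gt0 // I0 Ioo.
have IE : I = (fine I)%:E by rewrite fineK // ge0_fin_numE // ltW.
pose k := (fine I)^-1.
have k0 : 0 < k by rewrite invr_gt0.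
have eta1 : (1 <= \int[completed_lebesgue_measure]_(t in [set t : lebR R | (r1 < t < r2)%R])
                   (k%:E * psi t))%E.
  by rewrite ge0_integralZl_gt0 // -/I IE -EFinM mulVf ?gt_eqF.
have := ring r1 r2 r10 r12 _ (measurable_funeM _ mpsi)
  (fun t tr => mule_ge0 (ltW k0 : (0 <= k%:E)%E) (psi0 t tr)) eta1.
have -> : mannulus d x0 r1 r2 `&` D = mannulus d x0 r1 r2 by exact/setIidl.
move=> /le_trans; apply.
rewrite (@eq_integral _ _ _ _ _
  (fun x => (k `^ alpha)%:E * (Q x * psi (d x x0) `^ alpha))%E); last first.
  move=> x /set_mem xA.
  by rewrite poweRM ?lee_fin ?(ltW k0) ?psi0 // poweR_EFin muleCA.
rewrite ge0_integralZl_gt0 ?powR_gt0 //; last first.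
  by move=> x xA; rewrite mule_ge0 ?poweR_ge0 // Q0 //; exact: AD.
by rewrite muleC inv_powR.
Qed.

Unset Implicit Arguments.
Set Strict Implicit.

Theorem lemma3 (R : realType) (dsp dsp' : measure_display)
  (X : measurableType dsp) (X' : measurableType dsp')
  (d : X -> X -> R) (d' : X' -> X' -> R)
  (mu : {measure set X -> \bar R}) (mu' : {measure set X' -> \bar R})
  (alpha alpha' : R)
  (Hd : is_metric d) (Hd' : is_metric d')
  (HBX : borel_for d) (HBX' : borel_for d')
  (Hmu : locally_finite d mu) (Hmu' : locally_finite d' mu')
  (Hdim : hdim d = alpha%:E) (Halpha : 2 <= alpha)
  (Hdim' : hdim d' = alpha'%:E) (Halpha' : 2 <= alpha')
  (D : set X) (HD : d_domain d D)
  (Q : X -> \bar R) (HQm : measurable_fun D Q)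
  (HQ0 : forall x, D x -> (0 <= Q x)%E)
  (f : X -> X') (Hfc : cont_map_on d d' D f)
  (Hfo : open_map_on d d' D f) (Hfd : discrete_map_on d D f)
  (x0 : X) (Hx0 : D x0)
  (Hring : ring_Q_map d d' mu mu' alpha alpha' D f Q x0)
  (eps0 : R) (Heps0 : 0 < eps0)
  (Hdist : (eps0%:E < dist_to d x0 (d_boundary d D))%E)
  (Hcomp : d_compact d (d_closure d (mball d x0 eps0)))
  (HcompD : d_closure d (mball d x0 eps0) `<=` D)
  (eps0' : R) (Heps0' : 0 < eps0' < eps0)
  (F : R -> R -> \bar R) (psi : R -> lebR R -> \bar R)
  (Hpsim : forall e, 0 < e < eps0' ->
     measurable_fun [set t : lebR R | (e < t < eps0)%R] (psi e))
  (Hpsi0 : forall e, 0 < e < eps0' ->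
     forall t : lebR R, (e < t < eps0)%R -> (0 <= psi e t)%E)
  (HF : forall e, 0 < e < eps0' ->
     (\int[mu]_(x in mannulus d x0 e eps0)
        (Q x * (psi e (d x x0) `^ alpha)) <= F e eps0)%E)
  (HI : forall e, 0 < e < eps0' ->
     (0 < \int[completed_lebesgue_measure]_(t in [set t : lebR R | (e < t < eps0)%R])
            psi e t < +oo)%E)
  (HA : condition_A d d' D f) :
  forall e, 0 < e < eps0' ->
    (modulus d' mu' alpha'
       (curve_family d' (f @` d_closure d (mball d x0 e))
                        (d_boundary d' (f @` mball d x0 eps0)) setT)
     <= F e eps0 *
        ((fine (\int[completed_lebesgue_measure]_(t in [set t : lebR R | (e < t < eps0)%R])
                 psi e t) `^ alpha)^-1)%:E)%E.
Proof.
move=> e /andP[e0 ee']; have he : 0 < e < eps0' by rewrite e0 ee'.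
have eeps : e < eps0 by case/andP: Heps0' => _; exact: lt_trans ee'.
have AD : mannulus d x0 e eps0 `<=` D.
  by move=> x /andP[_ xe]; apply/HcompD/(mball_sub_closure Hd).
apply: le_trans
  (modulus_le _ _ (image_annulus_family_minorizes Hd Hd' Hfc Hfo Hfd HA Hcomp HcompD e0 eeps)) _.
apply: le_trans
  (ring_Q_map_modulus_le Hring e0 eeps AD HQ0 (Hpsim e he) (Hpsi0 e he) (HI e he)) _.
by rewrite lee_wpmul2r ?lee_fin ?invr_ge0 ?powR_ge0 ?HF.
Qed.
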